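(* Let $2\le k\le n$. Let $g_1:\mathbb{Z}^{n+1}\to[0,\infty)$ and, for $i=2,\dots,k$, $g_i:\mathbb{Z}^{n}\to[0,\infty)$ with $g_i\in\ell^2(\mathbb{Z}^n)$. For $z=(z_1,\dots,z_{n+1})\in\mathbb{Z}^{n+1}$ write $\hat z^{i}=(z_1,\dots,z_{i-1},z_{i+1},\dots,z_{n+1})\in\mathbb{Z}^n$. Then $$\Big\|g_1(z)\prod_{i=2}^kg_i(\hat z^{i})\Big\|_{\ell^{\frac{2}{k-1}}_z(\mathbb{Z}^{n+1})}\le\|g_1\|_{\ell^\infty_{z_1,z_{k+1},\dots,z_{n+1}}\ell^2_{z_2,\dots,z_k}}\prod_{i=2}^k\|g_i\|_{\ell^2(\mathbb{Z}^n)},$$ where $\|g_1\|_{\ell^\infty_{z_1,z_{k+1},\dots,z_{n+1}}\ell^2_{z_2,\dots,z_k}}=\sup_{z_1,z_{k+1},\dots,z_{n+1}}\big(\sum_{z_2,\dots,z_k}|g_1(z)|^2\big)^{1/2}$.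
   Context: This is a discrete Loomis–Whitney type inequality. In the paper it is phrased on an oblique lattice $\mathcal{L}=\{\sum_{j=1}^{n+1}z_jN_j:z\in\mathbb{Z}^{n+1}\}$ generated by linearly independent unit vectors $N_1,\dots,N_{n+1}$, with $g_i$ defined on the projected lattices $\pi_{N_i}(\mathcal{L})$ (projection along $N_i$ onto a hyperplane); in the coordinates $z$ this is exactly the statement above, since $g_i\circ\pi_{N_i}$ is a function of $\hat z^i$. *)

(* classical reals. Points of Z^m are lists of integers of length m;
   coordinate z_j (1-based, as in the paper) is the (j-1)-th list entry. *)
From Stdlib Require Import Reals ZArith List.
Import ListNotations.
Open Scope R_scope.

Definition sumR (f : list Z -> R) (S : list (list Z)) : R :=
  fold_right (fun z acc => f z + acc) 0 S.

Definition prodR (a b : nat) (f : nat -> R) : R :=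
  fold_right (fun i acc => f i * acc) 1 (seq a (S b - a)).

(* x^p for x >= 0 and p > 0, with 0^p = 0 *)
Definition rpow (x p : R) : R := if Rle_dec x 0 then 0 else Rpower x p.

(* hat z^i (1-based i): delete the i-th coordinate *)
Definition hat (i : nat) (z : list Z) : list Z :=
  firstn (pred i) z ++ skipn i z.

(* A is an upper bound of the l^2(Z^m) norm of h:
   every finite partial sum of h^2 is <= A^2 (so ||h||_2 = inf of such A >= 0). *)
Definition l2_bound (m : nat) (h : list Z -> R) (A : R) : Prop :=
  forall T : list (list Z), NoDup T -> Forall (fun w => length w = m) T ->
    sumR (fun w => h w ^ 2) T <= A ^ 2.

(* M is an upper bound of the mixed norm
   sup_{z_1, z_{k+1},...,z_{n+1}} (sum_{z_2,...,z_k} |g1 z|^2)^{1/2}. *)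
Definition mixed_bound (n k : nat) (g1 : list Z -> R) (M : R) : Prop :=
  forall (a : Z) (b : list Z) (T : list (list Z)),
    length b = (S n - k)%nat -> NoDup T -> Forall (fun w => length w = pred k) T ->
    sumR (fun w => Rabs (g1 (a :: w ++ b)) ^ 2) T <= M ^ 2.

(* Reorder the coordinates as (z_1, z_{k+1}, ..., z_{n+1}, z_2, ..., z_k) and put
   th = 1/(k-1).  The summand is then the product of the k factors (g_1^2)^th and
   (g_i(hat z^i)^2)^th, i = 2..k.  In every coordinate at least k-1 of these factors are
   summed: g_1 is summed in z_2, ..., z_k, and g_i in every coordinate but z_i, on which
   it does not depend.  Their exponents therefore add up to at least 1, so Hoelder's
   inequality, applied one coordinate at a time (Finner's inequality), bounds the sum over
   the box spanned by the coordinates of the support by the product of the th-th powers of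
   the mixed norms of the factors: these are at most M^2 for g_1 and ||g_i||_2^2 for the
   others. *)

From Stdlib Require Import Reals ZArith List Lia Lra Classical.
Import ListNotations.
Open Scope R_scope.

Section ListSums.
Context {T : Type}.
Implicit Types (f g : T -> R) (l : list T).

(* [sumR] is [lsum] at [T := list Z], up to conversion. *)
Definition lsum f l : R := fold_right (fun x acc => f x + acc) 0 l.
Definition lprod f l : R := fold_right (fun x acc => f x * acc) 1 l.

Lemma lsum_app f l1 l2 : lsum f (l1 ++ l2) = lsum f l1 + lsum f l2.
Proof. induction l1 as [|x l1 IH]; simpl; [|rewrite IH]; lra. Qed.

Lemma eq_lsum_in f g l : (forall x, In x l -> f x = g x) -> lsum f l = lsum g l.
Proof. induction l as [|x l IH]; simpl; intros H; [|rewrite H, IH]; auto. Qed.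

Lemma lsum_le f g l : (forall x, In x l -> f x <= g x) -> lsum f l <= lsum g l.
Proof.
  induction l as [|x l IH]; simpl; intros H; [lra|].
  apply Rplus_le_compat; auto.
Qed.

Lemma lsum_ge0 f l : (forall x, In x l -> 0 <= f x) -> 0 <= lsum f l.
Proof.
  induction l as [|x l IH]; simpl; intros H; [lra|].
  apply Rplus_le_le_0_compat; auto.
Qed.

Lemma lsum_mult_l c f l : lsum (fun x => c * f x) l = c * lsum f l.
Proof. induction l as [|x l IH]; simpl; [|rewrite IH]; lra. Qed.

Lemma lsum_plus f g l : lsum (fun x => f x + g x) l = lsum f l + lsum g l.
Proof. induction l as [|x l IH]; simpl; [|rewrite IH]; lra. Qed.

Lemma lsum_const c l : lsum (fun _ => c) l = INR (length l) * c.
Proof.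
  induction l as [|x l IH]; simpl lsum; [simpl; lra|].
  rewrite IH, length_cons, S_INR. lra.
Qed.

Lemma lsum_ge_term f l x : (forall y, In y l -> 0 <= f y) -> In x l -> f x <= lsum f l.
Proof.
  induction l as [|y l IH]; simpl; intros H Hx; [contradiction|destruct Hx as [<-|Hx]].
  - assert (0 <= lsum f l) by (apply lsum_ge0; auto). lra.
  - assert (f x <= lsum f l) by auto. specialize (H y (or_introl eq_refl)). lra.
Qed.

Lemma lprod_eq_in f g l : (forall x, In x l -> f x = g x) -> lprod f l = lprod g l.
Proof. induction l as [|x l IH]; simpl; intros H; [|rewrite H, IH]; auto. Qed.

Lemma lprod_ge0 f l : (forall x, In x l -> 0 <= f x) -> 0 <= lprod f l.
Proof. induction l as [|x l IH]; simpl; intros H; [lra|]. apply Rmult_le_pos; auto. Qed.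

Lemma lprod_le f g l : (forall x, In x l -> 0 <= f x <= g x) -> lprod f l <= lprod g l.
Proof.
  induction l as [|x l IH]; simpl; intros H; [lra|].
  destruct (H x (or_introl eq_refl)).
  apply Rmult_le_compat; auto. apply lprod_ge0. intros y Hy; apply H; auto.
Qed.

Lemma lprod_eq0 f l x : In x l -> f x = 0 -> lprod f l = 0.
Proof.
  induction l as [|y l IH]; simpl; intros Hx Hf; [contradiction|destruct Hx as [<-|Hx]].
  - rewrite Hf; lra.
  - rewrite IH; auto; lra.
Qed.

Lemma lprod_mult f g l : lprod (fun x => f x * g x) l = lprod f l * lprod g l.
Proof. induction l as [|x l IH]; simpl; [|rewrite IH]; ring. Qed.

Lemma lprod_pow2 f l : lprod (fun x => f x ^ 2) l = lprod f l ^ 2.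
Proof. induction l as [|x l IH]; unfold lprod in *; cbn [fold_right]; [|rewrite IH]; ring. Qed.

Lemma lprod_exp f l : lprod (fun x => exp (f x)) l = exp (lsum f l).
Proof. induction l as [|x l IH]; simpl; [|rewrite IH]; auto using exp_0, exp_plus. Qed.

Lemma lprod_filter (p : T -> bool) f l :
  lprod f l = lprod f (filter p l) * lprod f (filter (fun x => negb (p x)) l).
Proof. induction l as [|x l IH]; simpl; [lra|]. destruct (p x); simpl; rewrite IH; lra. Qed.

Section Remove.
Variable eq_dec : forall x y : T, {x = y} + {x <> y}.

Lemma lsum_remove_le f x l :
  (forall y, In y l -> 0 <= f y) -> lsum f (remove eq_dec x l) <= lsum f l.
Proof.
  induction l as [|y l IH]; simpl; intros H; [lra|].
  specialize (IH (fun z Hz => H z (or_intror Hz))). specialize (H y (or_introl eq_refl)).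
  destruct (eq_dec x y); simpl; lra.
Qed.

Lemma lsum_remove f x l :
  (forall y, In y l -> 0 <= f y) -> In x l -> f x + lsum f (remove eq_dec x l) <= lsum f l.
Proof.
  induction l as [|y l IH]; simpl; intros H Hx; [contradiction|].
  destruct (eq_dec x y) as [<-|Hxy].
  - pose proof (lsum_remove_le f x l (fun z Hz => H z (or_intror Hz))). lra.
  - destruct Hx as [->|Hx]; [congruence|]. simpl.
    specialize (IH (fun z Hz => H z (or_intror Hz)) Hx). lra.
Qed.

Lemma lsum_le_incl f l1 l2 :
  NoDup l1 -> incl l1 l2 -> (forall x, In x l2 -> 0 <= f x) -> lsum f l1 <= lsum f l2.
Proof.
  revert l2; induction l1 as [|x l1 IH]; simpl; intros l2 Hnd Hincl Hf.
  - now apply lsum_ge0.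
  - inversion Hnd as [|? ? Hx Hnd1]; subst.
    apply Rle_trans with (f x + lsum f (remove eq_dec x l2)).
    + apply Rplus_le_compat_l, IH; auto.
      * intros y Hy. apply in_in_remove; [intros ->; contradiction|]. apply Hincl; right; auto.
      * intros y Hy. apply Hf. eapply in_remove; eauto.
    + apply lsum_remove; auto. apply Hincl; left; auto.
Qed.
End Remove.

End ListSums.

Lemma lsum_map {S T} (h : S -> T) (f : T -> R) l : lsum f (map h l) = lsum (fun x => f (h x)) l.
Proof. induction l as [|x l IH]; simpl; [|rewrite IH]; auto. Qed.

Lemma lsum_flat_map {S T} (h : S -> list T) (f : T -> R) l :
  lsum f (flat_map h l) = lsum (fun x => lsum f (h x)) l.
Proof. induction l as [|x l IH]; simpl; [|rewrite lsum_app, IH]; auto. Qed.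

Lemma lsum_comm {S T} (h : S -> T -> R) l1 l2 :
  lsum (fun x => lsum (h x) l2) l1 = lsum (fun y => lsum (fun x => h x y) l1) l2.
Proof.
  induction l1 as [|x l1 IH]; simpl.
  - induction l2; simpl; lra.
  - rewrite IH, <- lsum_plus. auto.
Qed.

Lemma rpow_ge0 x p : 0 <= rpow x p.
Proof. unfold rpow, Rpower; destruct (Rle_dec x 0); [lra|left; apply exp_pos]. Qed.

Lemma rpow_eq_exp x p : 0 < x -> rpow x p = exp (p * ln x).
Proof. unfold rpow; destruct (Rle_dec x 0); [lra|auto]. Qed.

Lemma rpow_0_l p : rpow 0 p = 0.
Proof. unfold rpow; destruct (Rle_dec 0 0); lra. Qed.

Lemma rpow_mult_distr x y p : 0 <= x -> 0 <= y -> rpow (x * y) p = rpow x p * rpow y p.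
Proof.
  intros [Hx| <-] [Hy| <-]; rewrite ?Rmult_0_l, ?Rmult_0_r, ?rpow_0_l; try lra.
  rewrite !rpow_eq_exp by nra. rewrite ln_mult, <- exp_plus by lra. f_equal; ring.
Qed.

Lemma rpow_pow2 x p : 0 <= x -> rpow (x ^ 2) p = rpow x (2 * p).
Proof.
  intros [Hx| <-]; [|rewrite pow_i, !rpow_0_l by lia; auto].
  rewrite !rpow_eq_exp by nra. rewrite ln_pow by lra. f_equal. simpl; ring.
Qed.

Lemma rpow_le_l x y p : 0 < p -> 0 <= x <= y -> rpow x p <= rpow y p.
Proof.
  intros Hp [[Hx| <-] Hxy]; [|rewrite rpow_0_l; apply rpow_ge0].
  unfold rpow. destruct (Rle_dec x 0), (Rle_dec y 0); try lra.
  apply Rle_Rpower_l; lra.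
Qed.

Lemma rpow_rpow x p q : 0 <= x -> rpow (rpow x p) q = rpow x (p * q).
Proof.
  intros [Hx| <-]; [|rewrite !rpow_0_l; auto].
  rewrite (rpow_eq_exp x p), (rpow_eq_exp x), rpow_eq_exp, ln_exp by (auto; apply exp_pos).
  f_equal; ring.
Qed.

Lemma rpow_1 x : 0 <= x -> rpow x 1 = x.
Proof. intros [Hx| <-]; [|apply rpow_0_l]. rewrite rpow_eq_exp, Rmult_1_l, exp_ln; lra. Qed.

Lemma rpow_lprod {T} (f : T -> R) l p : (forall x, In x l -> 0 <= f x) ->
  lprod (fun x => rpow (f x) p) l = rpow (lprod f l) p.
Proof.
  induction l as [|x l IH]; simpl; intros H.
  - rewrite rpow_eq_exp, ln_1, Rmult_0_r, exp_0; lra.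
  - rewrite IH, rpow_mult_distr; auto. apply lprod_ge0; auto.
Qed.

Lemma rpow_le_of_le_rpow x y p : 0 < p -> 0 <= y -> x <= rpow y (/ p) -> rpow x p <= y.
Proof.
  intros Hp Hy Hx. destruct (Rle_dec x 0) as [Hx0|Hx0].
  - unfold rpow at 1. destruct (Rle_dec x 0); [auto|contradiction].
  - apply Rle_trans with (rpow (rpow y (/ p)) p); [apply rpow_le_l; lra|].
    rewrite rpow_rpow, Rinv_l, rpow_1; lra.
Qed.

Lemma exp_le_compat x y : x <= y -> exp x <= exp y.
Proof. intros [H| ->]; [left; apply exp_increasing|]; lra. Qed.

Lemma ln_le_compat x y : 0 < x -> x <= y -> ln x <= ln y.
Proof. intros H [Hxy| ->]; [left; apply ln_increasing|]; lra. Qed.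

(* exp lies above its tangent line at the weighted mean [mu]. *)
Lemma exp_lsum_convex {T} (w x : T -> R) l :
  (forall j, In j l -> 0 <= w j) -> lsum w l = 1 ->
  exp (lsum (fun j => w j * x j) l) <= lsum (fun j => w j * exp (x j)) l.
Proof.
  intros Hw Hsum. set (mu := lsum (fun j => w j * x j) l).
  apply Rle_trans with (lsum (fun j => exp mu * (w j + w j * x j + - mu * w j)) l).
  - rewrite lsum_mult_l, !lsum_plus, lsum_mult_l, Hsum. fold mu. right; ring.
  - apply lsum_le. intros j Hj.
    pose proof (exp_ineq1_le (x j - mu)) as Htan.
    replace (exp (x j)) with (exp mu * exp (x j - mu)) by (rewrite <- exp_plus; f_equal; ring).
    pose proof (exp_pos mu). specialize (Hw j Hj).
    assert (0 <= w j * exp mu * (exp (x j - mu) - (1 + (x j - mu)))).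
    { apply Rmult_le_pos; [apply Rmult_le_pos|]; lra. }
    nra.
Qed.

(* As [ln (y j) <= 0], shrinking the weights to [th j / lsum th l], which sum to 1, can only
   increase the product; then Jensen. *)
Lemma lprod_rpow_le_weighted_mean {T} (y th : T -> R) l :
  (forall j, In j l -> 0 < th j) -> 1 <= lsum th l -> (forall j, In j l -> 0 <= y j <= 1) ->
  lprod (fun j => rpow (y j) (th j)) l <= lsum (fun j => th j / lsum th l * y j) l.
Proof.
  intros Hth Hs Hy. set (s := lsum th l). assert (Hs1 : 1 <= s) by exact Hs.
  assert (Hw : forall j, In j l -> 0 <= th j / s).
  { intros j Hj. specialize (Hth j Hj). unfold Rdiv. apply Rmult_le_pos; [lra|].
    left; apply Rinv_0_lt_compat; lra. }
  destruct (classic (exists j, In j l /\ y j = 0)) as [[j [Hj Hy0]]|Hpos].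
  { rewrite (lprod_eq0 _ _ j Hj) by (rewrite Hy0; apply rpow_0_l).
    apply lsum_ge0. intros i Hi. apply Rmult_le_pos; [apply Hw|apply Hy]; auto. }
  assert (Hy' : forall j, In j l -> 0 < y j).
  { intros j Hj. destruct (Hy j Hj) as [[]]; auto. exfalso; eauto. }
  rewrite (lprod_eq_in _ (fun j => exp (th j * ln (y j)))) by (intros; apply rpow_eq_exp; auto).
  rewrite lprod_exp.
  apply Rle_trans with (exp (lsum (fun j => th j / s * ln (y j)) l)).
  - apply exp_le_compat, lsum_le. intros j Hj.
    assert (ln (y j) <= 0) by (rewrite <- ln_1; apply ln_le_compat; [apply Hy'|apply Hy]; auto).
    specialize (Hth j Hj).
    assert (0 < / s <= 1).
    { split; [apply Rinv_0_lt_compat; lra|]. rewrite <- Rinv_1. apply Rinv_le_contravar; lra. }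
    assert (0 <= th j * - ln (y j) * (1 - / s)) by (repeat apply Rmult_le_pos; lra).
    unfold Rdiv. nra.
  - rewrite (eq_lsum_in (fun j => th j / s * y j) (fun j => th j / s * exp (ln (y j))))
      by (intros; rewrite exp_ln; auto).
    apply exp_lsum_convex; auto.
    unfold Rdiv. rewrite (eq_lsum_in _ (fun j => / s * th j)) by (intros; ring).
    rewrite lsum_mult_l. fold s. field. lra.
Qed.

Lemma holder_lsum_lprod {I T} (a : I -> T -> R) (th : I -> R) Js Ts :
  (forall j t, 0 <= a j t) -> (forall j, In j Js -> 0 < th j) -> 1 <= lsum th Js ->
  lsum (fun t => lprod (fun j => rpow (a j t) (th j)) Js) Ts
  <= lprod (fun j => rpow (lsum (a j) Ts) (th j)) Js.
Proof.
  intros Ha Hth Hs. set (S j := lsum (a j) Ts). set (s := lsum th Js).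
  assert (Hs1 : 1 <= s) by exact Hs.
  destruct (classic (exists j, In j Js /\ S j = 0)) as [[j [Hj HS0]]|HSpos].
  { assert (Hz : forall t, In t Ts -> a j t = 0).
    { intros t Ht. pose proof (lsum_ge_term (a j) Ts t (fun t _ => Ha j t) Ht). fold (S j) in H.
      specialize (Ha j t). lra. }
    rewrite (lprod_eq0 _ _ j Hj) by (fold (S j); rewrite HS0; apply rpow_0_l).
    rewrite (eq_lsum_in _ (fun _ => 0)), lsum_const; [lra|].
    intros t Ht. apply (lprod_eq0 _ _ j Hj). rewrite Hz; auto using rpow_0_l. }
  assert (HS : forall j, In j Js -> 0 < S j).
  { intros j Hj. destruct (Rle_dec (S j) 0) as [H|H]; [|lra].
    exfalso. apply HSpos. exists j. split; auto. apply Rle_antisym; auto. apply lsum_ge0; auto. }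
  set (P := lprod (fun j => rpow (S j) (th j)) Js).
  assert (HP : 0 <= P) by (apply lprod_ge0; intros; apply rpow_ge0).
  apply Rle_trans with (lsum (fun t => P * lsum (fun j => th j / s * (a j t / S j)) Js) Ts).
  - apply lsum_le. intros t Ht.
    rewrite (lprod_eq_in _ (fun j => rpow (S j) (th j) * rpow (a j t / S j) (th j))).
    2:{ intros j Hj. specialize (HS j Hj). rewrite <- rpow_mult_distr.
        - f_equal. field. lra.
        - lra.
        - unfold Rdiv. apply Rmult_le_pos; [apply Ha|left; apply Rinv_0_lt_compat; auto]. }
    rewrite lprod_mult. apply Rmult_le_compat_l; auto.
    apply lprod_rpow_le_weighted_mean; auto.
    intros j Hj. specialize (HS j Hj). split.
    + unfold Rdiv. apply Rmult_le_pos; [apply Ha|left; apply Rinv_0_lt_compat; auto].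
    + apply Rmult_le_reg_r with (S j); auto. unfold Rdiv. rewrite Rmult_assoc, Rinv_l by lra.
      rewrite Rmult_1_l, Rmult_1_r. apply lsum_ge_term; auto.
  - rewrite lsum_mult_l, lsum_comm.
    rewrite (eq_lsum_in _ (fun j => / s * th j)).
    + rewrite lsum_mult_l. fold s. rewrite Rinv_l, Rmult_1_r by lra. apply Rle_refl.
    + intros j Hj. specialize (HS j Hj).
      rewrite (eq_lsum_in _ (fun t => th j / s / S j * a j t)) by (intros; unfold Rdiv; ring).
      rewrite lsum_mult_l. fold (S j). field. lra.
Qed.

Fixpoint box (Vs : list (list Z)) : list (list Z) :=
  match Vs with
  | [] => [[]]
  | V :: Vs' => flat_map (fun t => map (cons t) (box Vs')) V
  end.

Lemma lsum_box_cons (f : list Z -> R) V Vs :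
  lsum f (box (V :: Vs)) = lsum (fun t => lsum (fun w => f (t :: w)) (box Vs)) V.
Proof. simpl. rewrite lsum_flat_map. apply eq_lsum_in. intros; apply lsum_map. Qed.

Lemma length_in_box Vs u : In u (box Vs) -> length u = length Vs.
Proof.
  revert u; induction Vs as [|V Vs IH]; simpl; intros u Hu.
  - destruct Hu as [<-|[]]; auto.
  - apply in_flat_map in Hu as [t [_ Hu]]. apply in_map_iff in Hu as [w [<- Hw]].
    simpl; f_equal; auto.
Qed.

Lemma in_box Vs u : length u = length Vs ->
  (forall c, (c < length u)%nat -> In (nth c u 0%Z) (nth c Vs [])) -> In u (box Vs).
Proof.
  revert u; induction Vs as [|V Vs IH]; intros [|t w] Hlen Hu; simpl in *; try lia; auto.
  apply in_flat_map. exists t. split; [apply (Hu 0%nat); lia|].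
  apply in_map, IH; [lia|]. intros c Hc. apply (Hu (S c)); lia.
Qed.

Lemma NoDup_box Vs : Forall (@NoDup Z) Vs -> NoDup (box Vs).
Proof.
  induction 1 as [|V Vs HV _ IH]; simpl; [constructor; auto; constructor|].
  induction HV as [|t V Ht _ IHV]; simpl; [constructor|].
  apply NoDup_app; auto.
  - apply NoDup_map_NoDup_ForallPairs; auto. intros w w' _ _ H; injection H; auto.
  - intros u Hu Hu'. apply in_map_iff in Hu as [w [<- _]].
    apply in_flat_map in Hu' as [t' [Ht' Hu']]. apply in_map_iff in Hu' as [w' [Heq _]].
    injection Heq; intros _ ->. contradiction.
Qed.

(* Over an empty list the maximum is 0, which is harmless for nonnegative functions. *)
Definition lmax {T} (h : T -> R) (l : list T) : R :=
  fold_right (fun t acc => Rmax (h t) acc) 0 l.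

Lemma lmax_ge_term {T} (h : T -> R) l t : In t l -> h t <= lmax h l.
Proof.
  induction l as [|x l IH]; simpl; intros Ht; [contradiction|].
  destruct Ht as [<-|Ht]; [apply Rmax_l|].
  eapply Rle_trans; [apply IH; auto|apply Rmax_r].
Qed.

Lemma lmax_ge0 {T} (h : T -> R) l : 0 <= lmax h l.
Proof. induction l as [|x l IH]; simpl; [lra|]. eapply Rle_trans; [apply IH|apply Rmax_r]. Qed.

Lemma lmax_le {T} (h : T -> R) l B : 0 <= B -> (forall t, In t l -> h t <= B) -> lmax h l <= B.
Proof. induction l as [|x l IH]; simpl; intros HB Hh; auto. apply Rmax_lub; auto. Qed.

(* [summed c] selects the l^1 norm (if true) or the l^infinity norm (if false)
   in coordinate [c]; coordinate 0 is the outermost one. *)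
Fixpoint mixed_norm (Vs : list (list Z)) (summed : nat -> bool) (f : list Z -> R) : R :=
  match Vs with
  | [] => f []
  | V :: Vs' =>
      let inner t := mixed_norm Vs' (fun c => summed (S c)) (fun w => f (t :: w)) in
      if summed 0%nat then lsum inner V else lmax inner V
  end.

Lemma mixed_norm_ge0 Vs summed f : (forall w, 0 <= f w) -> 0 <= mixed_norm Vs summed f.
Proof.
  revert summed f; induction Vs as [|V Vs IH]; simpl; intros summed f Hf; auto.
  destruct (summed 0%nat); [apply lsum_ge0; auto|apply lmax_ge0].
Qed.

Lemma mixed_norm_all_summed Vs f : mixed_norm Vs (fun _ => true) f = lsum f (box Vs).
Proof.
  revert f; induction Vs as [|V Vs IH]; intros f; simpl; [lra|].
  rewrite lsum_flat_map. apply eq_lsum_in. intros t _. rewrite IH, lsum_map. auto.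
Qed.

(* Finner's inequality: Hoelder's inequality in the outermost coordinate, then induction. *)
Lemma lsum_box_lprod_le_mixed_norms Vs (Js : list nat) (F : nat -> list Z -> R)
  (summed : nat -> nat -> bool) (th : nat -> R) :
  (forall j w, 0 <= F j w) -> (forall j, In j Js -> 0 < th j) ->
  (forall c, (c < length Vs)%nat -> 1 <= lsum th (filter (fun j => summed j c) Js)) ->
  lsum (fun w => lprod (fun j => rpow (F j w) (th j)) Js) (box Vs)
  <= lprod (fun j => rpow (mixed_norm Vs (summed j) (F j)) (th j)) Js.
Proof.
  revert F summed. induction Vs as [|V Vs IH]; intros F summed HF Hth Hcover.
  { simpl. lra. }
  rewrite lsum_box_cons.
  set (a j t := mixed_norm Vs (fun c => summed j (S c)) (fun w => F j (t :: w))).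
  set (P j := summed j 0%nat).
  assert (Ha : forall j t, 0 <= a j t) by (intros; apply mixed_norm_ge0; auto).
  set (C := lprod (fun j => rpow (lmax (a j) V) (th j)) (filter (fun j => negb (P j)) Js)).
  assert (HC : 0 <= C) by (apply lprod_ge0; intros; apply rpow_ge0).
  apply Rle_trans with (lsum (fun t => lprod (fun j => rpow (a j t) (th j)) Js) V).
  { apply lsum_le. intros t _.
    apply (IH (fun j w => F j (t :: w)) (fun j c => summed j (S c))); auto.
    intros c Hc. apply Hcover. simpl; lia. }
  apply Rle_trans with (lsum (fun t => C * lprod (fun j => rpow (a j t) (th j)) (filter P Js)) V).
  { apply lsum_le. intros t Ht. rewrite (lprod_filter P), Rmult_comm.
    apply Rmult_le_compat_r; [apply lprod_ge0; intros; apply rpow_ge0|].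
    apply lprod_le. intros j Hj. apply filter_In in Hj as [Hj _].
    split; [apply rpow_ge0|]. apply rpow_le_l; auto. split; auto. apply lmax_ge_term; auto. }
  rewrite lsum_mult_l, (lprod_filter P), Rmult_comm.
  apply Rmult_le_compat.
  - apply lsum_ge0. intros; apply lprod_ge0. intros; apply rpow_ge0.
  - exact HC.
  - apply Rle_trans with (lprod (fun j => rpow (lsum (a j) V) (th j)) (filter P Js)).
    + apply holder_lsum_lprod; auto.
      * intros j Hj. apply filter_In in Hj as [Hj _]. auto.
      * apply (Hcover 0%nat). simpl; lia.
    + right. apply lprod_eq_in. intros j Hj. apply filter_In in Hj as [_ Hj].
      simpl. unfold P in Hj. rewrite Hj. auto.
  - right. apply lprod_eq_in. intros j Hj. apply filter_In in Hj as [_ Hj].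
    simpl. unfold P in Hj. destruct (summed j 0%nat); [discriminate|auto].
Qed.

Lemma mixed_norm_max_prefix_le p Vs f B :
  (p < length Vs)%nat -> 0 <= B ->
  (forall a, length a = S p -> lsum (fun w => f (a ++ w)) (box (skipn (S p) Vs)) <= B) ->
  mixed_norm Vs (fun c => p <? c)%nat f <= B.
Proof.
  revert Vs f; induction p as [|p IH]; intros [|V Vs] f Hp HB Hf; simpl in Hp; try lia;
    simpl; apply lmax_le; auto; intros t _.
  - change (mixed_norm Vs (fun _ => true) (fun w => f (t :: w)) <= B).
    rewrite mixed_norm_all_summed. apply (Hf [t]); auto.
  - apply IH; [lia|auto|]. intros a Ha. apply (Hf (t :: a)). simpl; lia.
Qed.

(* [hat] counts from 1, so [hat (S q)] deletes coordinate [q]. *)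
Lemma mixed_norm_max_at_le q Vs f h :
  (forall w, 0 <= h w) -> (forall u, length u = length Vs -> f u = h (hat (S q) u)) ->
  mixed_norm Vs (fun c => negb (c =? q))%nat f <= lsum h (box (firstn q Vs ++ skipn (S q) Vs)).
Proof.
  revert q f h; induction Vs as [|V Vs IH]; intros q f h Hh Hf.
  - simpl. rewrite (Hf []) by auto. unfold hat. destruct q; simpl; lra.
  - destruct q as [|q]; simpl.
    + apply lmax_le; [apply lsum_ge0; auto|]. intros t _.
      change (mixed_norm Vs (fun _ => true) (fun w => f (t :: w)) <= lsum h (box Vs)).
      rewrite mixed_norm_all_summed. right. apply eq_lsum_in. intros w Hw.
      rewrite Hf by (simpl; f_equal; apply length_in_box; auto). auto.
    + rewrite lsum_flat_map. apply lsum_le. intros t _. rewrite lsum_map.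
      apply (IH q (fun w => f (t :: w)) (fun w => h (t :: w))); auto.
      intros w Hw. rewrite Hf by (simpl; f_equal; auto). auto.
Qed.

Definition coord_box (N : nat) (U : list (list Z)) : list (list Z) :=
  map (fun c => nodup Z.eq_dec (map (fun u => nth c u 0%Z) U)) (seq 0 N).

Lemma lsum_le_lsum_coord_box N U (f : list Z -> R) :
  NoDup U -> (forall u, In u U -> length u = N) -> (forall w, 0 <= f w) ->
  lsum f U <= lsum f (box (coord_box N U)).
Proof.
  intros Hnd HU Hf. apply (lsum_le_incl (list_eq_dec Z.eq_dec)); auto.
  intros u Hu. apply in_box.
  - unfold coord_box. rewrite length_map, length_seq; auto.
  - intros c Hc. rewrite HU in Hc by auto. unfold coord_box.
    set (F c := nodup Z.eq_dec (map (fun u => nth c u 0%Z) U)).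
    rewrite nth_indep with (d' := F 0%nat) by (rewrite length_map, length_seq; auto).
    rewrite map_nth, seq_nth by auto. apply nodup_In, in_map_iff. exists u; auto.
Qed.

Lemma coord_box_NoDup N U : Forall (@NoDup Z) (coord_box N U).
Proof.
  apply Forall_forall. intros V HV. apply in_map_iff in HV as [c [<- _]]. apply NoDup_nodup.
Qed.

Lemma length_coord_box N U : length (coord_box N U) = N.
Proof. unfold coord_box. rewrite length_map, length_seq. auto. Qed.

Lemma Forall_firstn_skipn {T} (P : T -> Prop) q s l :
  Forall P l -> Forall P (firstn q l ++ skipn s l).
Proof.
  intros Hl. pose proof Hl as Hq. pose proof Hl as Hs.
  rewrite <- (firstn_skipn q l), Forall_app in Hq. rewrite <- (firstn_skipn s l), Forall_app in Hs.
  apply Forall_app. tauto.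
Qed.

Definition rot (p : nat) (u : list Z) : list Z :=
  match u with [] => [] | a :: u' => a :: skipn p u' ++ firstn p u' end.

Lemma length_rot p u : length (rot p u) = length u.
Proof. destruct u; simpl; auto. rewrite length_app, length_skipn, length_firstn. lia. Qed.

Lemma rot_app p a b w : length b = p -> rot p (a :: b ++ w) = a :: w ++ b.
Proof.
  intros <-. simpl. rewrite skipn_app, firstn_app, skipn_all, firstn_all, Nat.sub_diag.
  simpl. rewrite app_nil_r. auto.
Qed.

Lemma rot_rot p q u : length u = S (p + q) -> rot q (rot p u) = u.
Proof.
  destruct u as [|a u]; intros Hu; [reflexivity|simpl in Hu].
  change (rot q (a :: skipn p u ++ firstn p u) = a :: u).
  rewrite rot_app by (rewrite length_skipn; lia). rewrite firstn_skipn. auto.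
Qed.

Lemma hat_rot r m i u : length u = S (r + m) -> (2 <= i <= S m)%nat ->
  hat i (rot r u) = rot r (hat (S (r + i - 1)) u).
Proof.
  destruct u as [|a u]; intros Hu Hi; simpl in Hu; [lia|].
  rewrite <- (firstn_skipn r u).
  assert (Hb : length (firstn r u) = r) by (rewrite length_firstn; lia).
  assert (Hw : length (skipn r u) = m) by (rewrite length_skipn; lia).
  revert Hb Hw. generalize (firstn r u) (skipn r u). intros b w Hb Hw.
  rewrite rot_app by auto.
  replace i with (S (S (i - 2))) by lia. set (j := (i - 2)%nat).
  replace (S (r + S (S j) - 1)) with (S (S (r + j))) by lia.
  unfold hat. cbn [pred]. rewrite !firstn_cons, !skipn_cons.
  rewrite firstn_app, skipn_app, firstn_app, skipn_app, Hb, Hw.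
  rewrite (firstn_all2 (n := r + j) b), (skipn_all2 (n := S (r + j)) b) by lia.
  replace (j - m)%nat with 0%nat by lia. replace (S j - m)%nat with 0%nat by lia.
  replace (r + j - r)%nat with j by lia. replace (S (r + j) - r)%nat with (S j) by lia.
  rewrite firstn_O, skipn_O, !app_nil_r, app_nil_l, <- !app_comm_cons, <- app_assoc.
  rewrite rot_app, app_assoc by auto. reflexivity.
Qed.

Lemma length_filter_all_but (p : nat -> bool) l e : NoDup l ->
  (forall x, In x l -> x <> e -> p x = true) -> (length l - 1 <= length (filter p l))%nat.
Proof.
  induction l as [|x l IH]; simpl; intros Hnd Hp; [lia|]. inversion Hnd as [|? ? Hx Hnd']; subst.
  destruct (Nat.eq_dec x e) as [->|Hxe].
  - assert (filter p l = l) as ->.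
    { apply forallb_filter_id, forallb_forall. intros y Hy. apply Hp; auto. intros ->; auto. }
    destruct (p e); simpl; lia.
  - rewrite Hp by auto. simpl. specialize (IH Hnd' (fun y Hy => Hp y (or_intror Hy))). lia.
Qed.

Lemma prodR_lprod a b f : prodR a b f = lprod f (seq a (S b - a)).
Proof. reflexivity. Qed.

Lemma seq_1_cons k : (1 <= k)%nat -> seq 1 k = 1%nat :: seq 2 (S k - 2).
Proof. intros Hk. replace k with (S (S k - 2)) at 1 by lia. reflexivity. Qed.

Section RotatedFactors.
Variables (n k : nat) (g1 : list Z -> R) (g : nat -> list Z -> R).
Hypothesis Hk : (2 <= k)%nat.
Hypothesis Hkn : (k <= n)%nat.
Hypothesis Hg1 : forall z, length z = S n -> 0 <= g1 z.
Hypothesis Hg : forall i z, (2 <= i <= k)%nat -> length z = n -> 0 <= g i z.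

Local Notation r := (S n - k)%nat.

(* In u = rot (k - 1) z = (z_1, z_{k+1}, ..., z_{n+1}, z_2, ..., z_k), so that z = rot r u,
   the supremum coordinates of g_1 come first, as its mixed norm requires; g_i does not
   depend on coordinate r + i - 1 of u. *)
Definition factor (j : nat) (u : list Z) : R :=
  if (j =? 1)%nat then g1 (rot r u) ^ 2 else g j (hat j (rot r u)) ^ 2.

Definition factor_summed (j c : nat) : bool :=
  if (j =? 1)%nat then (r <? c)%nat else negb (c =? r + j - 1)%nat.

Lemma factor_ge0 j u : 0 <= factor j u.
Proof. unfold factor. destruct (j =? 1)%nat; apply pow2_ge_0. Qed.

Lemma integrand_rot_factor u th : length u = S n ->
  rpow (g1 (rot r u) * prodR 2 k (fun i => g i (hat i (rot r u)))) (2 * th)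
  = lprod (fun j => rpow (factor j u) th) (seq 1 k).
Proof.
  intros Hu. assert (Hz : length (rot r u) = S n) by (rewrite length_rot; auto).
  assert (Hgi : forall i, In i (seq 2 (S k - 2)) -> 0 <= g i (hat i (rot r u))).
  { intros i Hi. apply in_seq in Hi. apply Hg; [lia|]. unfold hat.
    rewrite length_app, length_firstn, length_skipn. lia. }
  rewrite seq_1_cons by lia.
  transitivity (rpow (factor 1 u) th * lprod (fun j => rpow (factor j u) th) (seq 2 (S k - 2)));
    [|reflexivity].
  rewrite prodR_lprod, rpow_mult_distr by (auto; apply lprod_ge0; auto).
  unfold factor at 1. simpl Nat.eqb. cbv iota.
  rewrite rpow_pow2, <- rpow_lprod by auto. f_equal.
  apply lprod_eq_in. intros i Hi. unfold factor.
  destruct (Nat.eqb_spec i 1) as [->|_]; [apply in_seq in Hi; lia|].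
  rewrite rpow_pow2; auto.
Qed.

Lemma factor_summed_cover c :
  1 <= lsum (fun _ => / INR (k - 1)) (filter (fun j => factor_summed j c) (seq 1 k)).
Proof.
  assert (Hm : 0 < INR (k - 1)) by (apply lt_0_INR; lia).
  rewrite lsum_const. rewrite <- (Rinv_r (INR (k - 1))) at 1 by lra.
  apply Rmult_le_compat_r; [left; apply Rinv_0_lt_compat; lra|]. apply le_INR.
  rewrite <- (length_seq k 1) at 1.
  apply (length_filter_all_but _ _ (if (c <=? r)%nat then 1 else c - r + 1)%nat);
    [apply seq_NoDup|].
  intros j Hj Hje. apply in_seq in Hj. unfold factor_summed.
  destruct (Nat.leb_spec c r), (Nat.eqb_spec j 1); try lia.
  - apply Bool.negb_true_iff, Nat.eqb_neq. lia.
  - apply Nat.ltb_lt. lia.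
  - apply Bool.negb_true_iff, Nat.eqb_neq. lia.
Qed.

Lemma mixed_norm_factor_1 M Vs : 0 <= M -> mixed_bound n k g1 M -> length Vs = S n ->
  Forall (@NoDup Z) Vs -> mixed_norm Vs (factor_summed 1) (factor 1) <= M ^ 2.
Proof.
  intros HM HMb HVs Hnd. apply mixed_norm_max_prefix_le; [lia|apply pow2_ge_0|].
  intros [|a b] Hb; simpl in Hb; [lia|]. injection Hb as Hb.
  rewrite (eq_lsum_in _ (fun w => Rabs (g1 (a :: w ++ b)) ^ 2)).
  - apply HMb; [auto| |].
    + apply NoDup_box, (Forall_firstn_skipn _ 0 (S r) _ Hnd).
    + apply Forall_forall. intros w Hw. rewrite (length_in_box _ _ Hw), length_skipn. lia.
  - intros w _. unfold factor. cbn [Nat.eqb].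
    rewrite <- app_comm_cons, rot_app, pow2_abs by auto. auto.
Qed.

Lemma mixed_norm_factor_ge2 i Ai Vs : (2 <= i <= k)%nat -> l2_bound n (g i) Ai ->
  length Vs = S n -> Forall (@NoDup Z) Vs -> mixed_norm Vs (factor_summed i) (factor i) <= Ai ^ 2.
Proof.
  intros Hi HA HVs Hnd.
  assert (Hi1 : (i =? 1)%nat = false) by (apply Nat.eqb_neq; lia).
  set (q := (r + i - 1)%nat). set (T := box (firstn q Vs ++ skipn (S q) Vs)).
  assert (HT : forall v, In v T -> length v = n).
  { intros v Hv. rewrite (length_in_box _ _ Hv), length_app, length_firstn, length_skipn. lia. }
  replace (factor_summed i) with (fun c => negb (c =? q))%nat
    by (unfold factor_summed; rewrite Hi1; reflexivity).
  eapply Rle_trans.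
  { apply (mixed_norm_max_at_le q Vs (factor i) (fun v => g i (rot r v) ^ 2)).
    - intros; apply pow2_ge_0.
    - intros u Hu. unfold factor. rewrite Hi1, (hat_rot r (k - 1)) by lia. reflexivity. }
  fold T. rewrite <- (lsum_map (rot r) (fun w => g i w ^ 2)). apply HA.
  - apply NoDup_map_NoDup_ForallPairs; [|apply NoDup_box, Forall_firstn_skipn, Hnd].
    intros v v' Hv Hv' Heq.
    rewrite <- (rot_rot r (k - 2) v), <- (rot_rot r (k - 2) v'), Heq by (rewrite HT; auto; lia).
    reflexivity.
  - apply Forall_forall. intros w Hw. apply in_map_iff in Hw as [v [<- Hv]].
    rewrite length_rot. auto.
Qed.

Lemma lprod_mixed_norm_factor_le M A Vs th : 0 < th -> 0 <= M -> mixed_bound n k g1 M ->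
  (forall i, (2 <= i <= k)%nat -> 0 <= A i /\ l2_bound n (g i) (A i)) ->
  length Vs = S n -> Forall (@NoDup Z) Vs ->
  lprod (fun j => rpow (mixed_norm Vs (factor_summed j) (factor j)) th) (seq 1 k)
  <= rpow (M * prodR 2 k A) (2 * th).
Proof.
  intros Hth HM HMb HA HVs Hnd.
  set (B j := if (j =? 1)%nat then M ^ 2 else A j ^ 2).
  apply Rle_trans with (lprod (fun j => rpow (B j) th) (seq 1 k)).
  { apply lprod_le. intros j Hj. apply in_seq in Hj. split; [apply rpow_ge0|].
    apply rpow_le_l; auto. split; [apply mixed_norm_ge0, factor_ge0|]. unfold B.
    destruct (Nat.eqb_spec j 1) as [->|Hj1].
    - apply mixed_norm_factor_1; auto.
    - apply mixed_norm_factor_ge2; auto; [lia|apply HA; lia]. }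
  rewrite rpow_lprod by (intros j _; unfold B; destruct (j =? 1)%nat; apply pow2_ge_0).
  rewrite <- rpow_pow2 by (apply Rmult_le_pos; auto; apply lprod_ge0; intros i Hi;
    apply in_seq in Hi; apply HA; lia).
  right. f_equal. rewrite seq_1_cons, prodR_lprod by lia. simpl lprod at 1.
  rewrite (lprod_eq_in B (fun i => A i ^ 2)), lprod_pow2; [unfold B; simpl; ring|].
  intros i Hi. apply in_seq in Hi. unfold B. destruct (Nat.eqb_spec i 1); [lia|auto].
Qed.

(* The finite set [Sz] is rotated and enlarged to the box spanned by its coordinates,
   on which Finner's inequality applies. *)
Lemma sum_integrand_le M A Sz : 0 <= M -> mixed_bound n k g1 M ->
  (forall i, (2 <= i <= k)%nat -> 0 <= A i /\ l2_bound n (g i) (A i)) ->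
  NoDup Sz -> Forall (fun z => length z = S n) Sz ->
  sumR (fun z => rpow (g1 z * prodR 2 k (fun i => g i (hat i z))) (2 / INR (k - 1))) Sz
  <= rpow (M * prodR 2 k A) (2 / INR (k - 1)).
Proof.
  intros HM HMb HA Hnd HSz. rewrite Forall_forall in HSz.
  set (th := / INR (k - 1)). assert (Hth : 0 < th) by (apply Rinv_0_lt_compat, lt_0_INR; lia).
  set (Phi z := rpow (g1 z * prodR 2 k (fun i => g i (hat i z))) (2 * th)).
  change (lsum Phi Sz <= rpow (M * prodR 2 k A) (2 * th)).
  set (U := map (rot (k - 1)) Sz). set (Vs := coord_box (S n) U).
  assert (Hrot : forall z, In z Sz -> rot r (rot (k - 1) z) = z)
    by (intros z Hz; apply rot_rot; rewrite HSz; auto; lia).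
  rewrite (eq_lsum_in _ (fun z => Phi (rot r (rot (k - 1) z)))) by (intros; rewrite Hrot; auto).
  rewrite <- (lsum_map (rot (k - 1)) (fun u => Phi (rot r u))). fold U.
  eapply Rle_trans; [apply (lsum_le_lsum_coord_box (S n))|]; fold Vs.
  { apply NoDup_map_NoDup_ForallPairs; auto. intros z z' Hz Hz' Heq.
    rewrite <- (Hrot z), <- (Hrot z'), Heq; auto. }
  { intros u Hu. apply in_map_iff in Hu as [z [<- Hz]]. rewrite length_rot. auto. }
  { intros; apply rpow_ge0. }
  rewrite (eq_lsum_in _ (fun u => lprod (fun j => rpow (factor j u) th) (seq 1 k)))
    by (intros u Hu; apply integrand_rot_factor; rewrite (length_in_box _ _ Hu);
        apply length_coord_box).
  eapply Rle_trans.
  - apply (lsum_box_lprod_le_mixed_norms Vs (seq 1 k) factor factor_summed (fun _ => th)).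
    + apply factor_ge0.
    + auto.
    + intros c _. apply factor_summed_cover.
  - apply lprod_mixed_norm_factor_le; auto; [apply length_coord_box|apply coord_box_NoDup].
Qed.

End RotatedFactors.

Theorem lemma6p3 (n k : nat) (g1 : list Z -> R) (g : nat -> list Z -> R)
  (M : R) (A : nat -> R) :
  (2 <= k)%nat -> (k <= n)%nat ->
  (forall z, length z = S n -> 0 <= g1 z) ->
  (forall i z, (2 <= i <= k)%nat -> length z = n -> 0 <= g i z) ->
  0 <= M -> mixed_bound n k g1 M ->
  (forall i, (2 <= i <= k)%nat -> 0 <= A i /\ l2_bound n (g i) (A i)) ->
  forall Sz : list (list Z), NoDup Sz -> Forall (fun z => length z = S n) Sz ->
    rpow (sumR (fun z => rpow (g1 z * prodR 2 k (fun i => g i (hat i z)))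
                              (2 / INR (k - 1)))
               Sz)
         (INR (k - 1) / 2)
    <= M * prodR 2 k A.
Proof.
  intros Hk Hkn Hg1 Hg HM HMb HA Sz HSz HSl.
  assert (Hm : 0 < INR (k - 1)) by (apply lt_0_INR; lia).
  apply rpow_le_of_le_rpow; [lra| |].
  - apply Rmult_le_pos; auto. apply lprod_ge0. intros i Hi. apply in_seq in Hi. apply HA. lia.
  - replace (/ (INR (k - 1) / 2)) with (2 / INR (k - 1)) by (field; lra).
    apply (sum_integrand_le n); auto.
Qed.
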